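(* For every reduced fraction $t\in(0,\infty)\cap\mathbb Q$, one has $\overline{\omega}_t=xyz\,\omega_t^{-1}$.
   Context: Modified lattice: the planar graph with vertex set $\mathbb Z^2$ whose edges are the horizontal unit segments, the vertical unit segments, and the diagonal segments of slope $-1$ joining $(i,j+1)$ and $(i+1,j)$. Words $\omega_t$: for reduced $t=p/q\in(0,\infty)$, let $L_t$ be the segment from $(0,0)$ to $(q,p)$, oriented from $(0,0)$ to $(q,p)$. List the edges whose relative interior meets $L_t$, in the order of the intersection points along $L_t$. A horizontal (resp. diagonal, vertical) edge contributes $x$ (resp. $y$, $z$) if its midpoint is not on the right-hand side of $L_t$ (including lying on $L_t$), and $x^{-1}$ (resp. $y^{-1}$, $z^{-1}$) if its midpoint is on the right-hand side. $\omega_t$ is the concatenation of these letters, viewed in the free group on $\{x,y,z\}$. Endpoint-completed word $\overline\omega_t$: choose $\varepsilon>0$ sufficiently small (so that the shifted segment has the same order of edge and triangle events away from the endpoints and passes through no lattice vertex and no edge midpoint), and let $\overline L_t$ be the segment from $(-\varepsilon,0)$ to $(q-\varepsilon,p)$, oriented from lower left to upper right. Read the edges crossed by $\overline L_t$ in order, with the half-open convention that the horizontal edge containing the initial endpoint $(-\varepsilon,0)$ is counted as crossed, while the edge containing the terminal endpoint is not counted. Assign letters by the same rule as for $\omega_t$ (horizontal/diagonal/vertical gives $x/y/z$ if the midpoint is not on the right-hand side of $\overline L_t$, and the inverse letter if it is). The resulting word is $\overline\omega_t$. *)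

From mathcomp Require Import all_boot all_order all_algebra.
Import Order.TTheory GRing.Theory Num.Theory.
Local Open Scope ring_scope.

(* a letter is (generator, sign); generator 0 = x, 1 = y, 2 = z;
   sign true = the generator itself, false = its inverse. *)
Definition letter := (nat * bool)%type.
Definition word := seq letter.

Definition gx : letter := (0%N, true).
Definition gy : letter := (1%N, true).
Definition gz : letter := (2%N, true).

Definition linv (a : letter) : letter := (a.1, ~~ a.2).

Definition winv (w : word) : word := rev (map linv w).

Fixpoint fred (w : word) : word :=
  match w with
  | [::] => [::]
  | a :: w' =>
      match fred w' with
      | b :: r' => if b == linv a then r' else a :: b :: r'
      | [::] => [:: a]
      end
  end.

Definition fg_eq (w1 w2 : word) : Prop := fred w1 = fred w2.

Inductive ekind := EH | EV | ED.
(* edge of kind k with base point (i,j):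
   EH : (i,j)--(i+1,j)   EV : (i,j)--(i,j+1)   ED : (i,j+1)--(i+1,j) *)
Definition edge := (ekind * (int * int))%type.

Section Geometry.
Variable R : realFieldType.

Definition cross (a b : R * R) : R := a.1 * b.2 - a.2 * b.1.
Definition vsub (a b : R * R) : R * R := (a.1 - b.1, a.2 - b.2).

Definition edge_start (e : edge) : R * R :=
  let: (k, (i, j)) := e in
  match k with
  | EH | EV => (i%:~R, j%:~R)
  | ED => (i%:~R, j%:~R + 1)
  end.

Definition edge_dir (e : edge) : R * R :=
  match e.1 with
  | EH => (1, 0)
  | EV => (0, 1)
  | ED => (1, -1)
  end.

Definition edge_mid (e : edge) : R * R :=
  ((edge_start e).1 + (edge_dir e).1 / 2, (edge_start e).2 + (edge_dir e).2 / 2).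

(* Segment P0 + s d.  Parameter s of the intersection point with the line of
   edge e, and parameter u of that point along e (the point is
   edge_start e + u * edge_dir e); valid when the two are not parallel. *)
Definition xden (P0 d : R * R) (e : edge) : R := cross d (edge_dir e).
Definition xs (P0 d : R * R) (e : edge) : R :=
  cross (vsub (edge_start e) P0) (edge_dir e) / xden P0 d e.
Definition xu (P0 d : R * R) (e : edge) : R :=
  cross (vsub (edge_start e) P0) d / xden P0 d e.

(* the relative interior of e meets the segment {P0 + s d | s in [0,1]}
   (closed = true) resp. {P0 + s d | s in [0,1)} (closed = false).
   Parallel edges are never counted (for d = (q,p) with p,q > 0 no lattice
   edge is parallel to d). *)
Definition meets (closed : bool) (P0 d : R * R) (e : edge) : bool :=
  [&& xden P0 d e != 0, 0 < xu P0 d e, xu P0 d e < 1, 0 <= xs P0 d e &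
      (if closed then xs P0 d e <= 1 else xs P0 d e < 1)].

(* letter contributed by an edge: x / y / z for horizontal / diagonal /
   vertical; inverse iff the midpoint lies strictly on the right-hand side
   of the oriented line through P0 with direction d. *)
Definition edge_gen (e : edge) : nat :=
  match e.1 with EH => 0%N | ED => 1%N | EV => 2%N end.

Definition edge_letter (P0 d : R * R) (e : edge) : letter :=
  (edge_gen e, 0 <= cross d (vsub (edge_mid e) P0)).

(* all edges with base point in [-2, q+1] x [-2, p+1]; this contains every
   edge whose relative interior meets a segment lying in [-1, q] x [0, p]. *)
Definition box (q p : nat) : seq edge :=
  flatten [seq [seq (k, ((a%:Z - 2)%R, (b%:Z - 2)%R)) | a <- iota 0 (q + 4),
                                                        b <- iota 0 (p + 4)]
          | k <- [:: EH; EV; ED]].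

Definition crossing_word (closed : bool) (P0 d : R * R) (q p : nat) : word :=
  map (edge_letter P0 d)
      (sort (fun e f => xs P0 d e <= xs P0 d f) (filter (meets closed P0 d) (box q p))).

Definition omega (p q : nat) : word :=
  crossing_word true (0, 0) (q%:R, p%:R) q p.

Definition omega_bar (p q : nat) (eps : R) : word :=
  crossing_word false (- eps, 0) (q%:R, p%:R) q p.

End Geometry.

From HB Require Import structures.
From mathcomp Require Import all_boot all_order all_algebra.
From mathcomp Require Import zify ring lra.
Import Order.TTheory GRing.Theory Num.Theory.
Local Open Scope ring_scope.

(* Along the segment from (-eps, 0) with direction (q, p), the parameters at
   which an edge is met, and the side of its midpoint, are affine in eps with
   integer coefficients, so everything reduces to integer arithmetic.  For small
   eps the shifted segment meets the edges met by L_t and, before them, three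
   edges at the origin: the horizontal edge containing its starting point, then
   the diagonal and the vertical edge, contributing xyz.  Nothing changes at the
   far end since, by coprimality, L_t contains no lattice point besides its
   endpoints.  The shift only inverts the letters of the edges whose midpoint
   lies on L_t.  Finally the half-turn about the midpoint of L_t maps the edges
   met by L_t onto themselves in reverse order and swaps the two sides of L_t,
   which turns omega_t into the inverse of the rest of omega_bar_t. *)

Definition ekind_eqb (a b : ekind) : bool :=
  match a, b with EH, EH | EV, EV | ED, ED => true | _, _ => false end.

Lemma ekind_eqP : Equality.axiom ekind_eqb.
Proof. by case; case; constructor. Qed.

HB.instance Definition _ := hasDecEq.Build ekind ekind_eqP.

Section LatticeData.
Variables p q : nat.

(* Integer numerators of xu, xs and of twice the side test of the midpoint, for
   the direction (q, p) and eps = 0; see xu_dir, xs_dir and cross_mid_dir. *)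
Definition cross_den (k : ekind) : int :=
  match k with EH => p%:Z | EV => q%:Z | ED => p%:Z + q%:Z end.

Definition edge_num (e : edge) : int :=
  let: (k, (i, j)) := e in
  match k with
  | EH => j * q%:Z - i * p%:Z
  | EV => i * p%:Z - j * q%:Z
  | ED => (j + 1) * q%:Z - i * p%:Z
  end.

Definition seg_num (e : edge) : int :=
  let: (k, (i, j)) := e in
  match k with EH => j | EV => i | ED => i + j + 1 end.

Definition mid_side (e : edge) : int :=
  let: (k, (i, j)) := e in
  match k with
  | EH => 2 * (j * q%:Z - i * p%:Z) - p%:Z
  | EV => 2 * (j * q%:Z - i * p%:Z) + q%:Z
  | ED => 2 * (j * q%:Z - i * p%:Z) + q%:Z - p%:Z
  end.

Definition crosses_segment (e : edge) : bool :=
  [&& 0 < edge_num e, edge_num e < cross_den e.1,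
      0 <= seg_num e & seg_num e <= cross_den e.1].

Definition crosses_shifted (e : edge) : bool :=
  [&& if e.1 is EV then 0 <= edge_num e else 0 < edge_num e,
      if e.1 is EV then edge_num e < cross_den e.1 else edge_num e <= cross_den e.1,
      0 <= seg_num e & seg_num e < cross_den e.1].

(* The point reflection z |-> (q, p) - z, acting on edges. *)
Definition half_turn (e : edge) : edge :=
  let: (k, (i, j)) := e in
  match k with
  | EH => (EH, (q%:Z - 1 - i, p%:Z - j))
  | EV => (EV, (q%:Z - i, p%:Z - j - 1))
  | ED => (ED, (q%:Z - 1 - i, p%:Z - 1 - j))
  end.

End LatticeData.

Definition origin_edges : seq edge := [:: (EH, (-1, 0)); (ED, (-1, 0)); (EV, (0, 0))].

Section FractionalShift.
Variables (R : realFieldType) (d : R).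
Hypotheses (d_gt0 : 0 < d) (d_lt1 : d < 1).
Implicit Types m n : int.

Lemma ltr_int_addfrac m n : ((m%:~R : R) < n%:~R + d) = (m <= n).
Proof.
have [d0 d1] := (d_gt0, d_lt1).
case: (lerP m n) => h.
- have : (m%:~R : R) <= n%:~R by rewrite ler_int.
  by move=> le_mn; apply/idP; lra.
- have : ((n + 1)%:~R : R) <= m%:~R by rewrite ler_int; lia.
  by rewrite intrD => lt_nm; apply/negbTE; rewrite -leNgt; lra.
Qed.

Lemma ler_int_addfrac m n : ((m%:~R : R) <= n%:~R + d) = (m <= n).
Proof.
have [d0 d1] := (d_gt0, d_lt1).
case: (lerP m n) => h.
- have : (m%:~R : R) <= n%:~R by rewrite ler_int.
  by move=> le_mn; apply/idP; lra.
- have : ((n + 1)%:~R : R) <= m%:~R by rewrite ler_int; lia.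
  by rewrite intrD => lt_nm; apply/negbTE; rewrite -ltNge; lra.
Qed.

Lemma ltr_int_fracD m n : ((m%:~R : R) + d < n%:~R) = (m < n).
Proof.
have [d0 d1] := (d_gt0, d_lt1).
case: (ltrP m n) => h.
- have : ((m + 1)%:~R : R) <= n%:~R by rewrite ler_int; lia.
  by rewrite intrD => lt_mn; apply/idP; lra.
- have : (n%:~R : R) <= m%:~R by rewrite ler_int.
  by move=> le_nm; apply/negbTE; rewrite -leNgt; lra.
Qed.

Lemma subr_frac_gt0 n : (0 < (n%:~R : R) - d) = (0 < n).
Proof. by rewrite -(ltr_int_fracD 0) mulr0z add0r subr_gt0. Qed.

Lemma ltr_subr_frac m n : ((m%:~R : R) - d < n%:~R) = (m <= n).
Proof. by rewrite -ltr_int_addfrac ltrBlDr. Qed.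

Lemma addr_frac_gt0 n : (0 < (n%:~R : R) + d) = (0 <= n).
Proof. by rewrite -(ltr_int_addfrac 0) mulr0z. Qed.

Lemma addr_frac_ge0 n : (0 <= (n%:~R : R) + d) = (0 <= n).
Proof. by rewrite -(ler_int_addfrac 0) mulr0z. Qed.

End FractionalShift.

Section Crossings.
Variable R : realFieldType.
Variables p q : nat.
Hypotheses (p_gt0 : (0 < p)%N) (q_gt0 : (0 < q)%N).

Local Notation dir := ((q%:R, p%:R) : R * R).
Local Notation start eps := ((- eps, 0) : R * R).

Definition edge_drift (k : ekind) : R := match k with EV => 1 | _ => -1 end.
Definition seg_drift (k : ekind) : R := match k with EH => 0 | _ => 1 end.

Lemma cross_den_gt0 k : (0 : R) < (cross_den p q k)%:~R.
Proof. by rewrite ltr0z; case: k => /=; lia. Qed.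

Lemma cross_den_le k : (cross_den p q k)%:~R <= (p%:R + q%:R : R).
Proof. by case: k => /=; rewrite ?intrD /= ?lerDl ?lerDr ?ler0n. Qed.

Lemma xden_dir eps e :
  xden R (start eps) dir e = edge_drift e.1 * (cross_den p q e.1)%:~R.
Proof. by case: e => [[] [i j]]; rewrite /xden /cross /= ?intrD; ring. Qed.

Lemma xden_dir_neq0 eps e : xden R (start eps) dir e != 0.
Proof.
rewrite xden_dir mulf_neq0 ?(lt0r_neq0 (cross_den_gt0 _)) //.
by case: e.1; rewrite /= ?oppr_eq0 oner_eq0.
Qed.

Lemma xu_dir eps e : xu R (start eps) dir e =
  ((edge_num p q e)%:~R + edge_drift e.1 * eps * p%:R) / (cross_den p q e.1)%:~R.
Proof.
have := lt0r_neq0 (cross_den_gt0 e.1).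
case: e => [[] [i j]]; rewrite /xu xden_dir /cross /vsub /= ?intrD ?intrB ?intrM /=.
all: by move=> ?; field.
Qed.

Lemma xs_dir eps e : xs R (start eps) dir e =
  ((seg_num e)%:~R + seg_drift e.1 * eps) / (cross_den p q e.1)%:~R.
Proof.
have := lt0r_neq0 (cross_den_gt0 e.1).
case: e => [[] [i j]]; rewrite /xs xden_dir /cross /vsub /= ?intrD ?intrB ?intrM /=.
all: by move=> ?; field.
Qed.

Lemma cross_mid_dir eps e :
  cross R dir (vsub R (edge_mid R e) (start eps)) = (mid_side p q e)%:~R / 2 - eps * p%:R.
Proof.
by case: e => [[] [i j]]; rewrite /edge_mid /cross /vsub /= ?intrD ?intrB ?intrM /=; field.
Qed.

Lemma meets_dir c eps e : meets R c (start eps) dir e =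
  [&& 0 < (edge_num p q e)%:~R + edge_drift e.1 * eps * p%:R,
      (edge_num p q e)%:~R + edge_drift e.1 * eps * p%:R < (cross_den p q e.1)%:~R,
      0 <= (seg_num e)%:~R + seg_drift e.1 * eps &
      if c then (seg_num e)%:~R + seg_drift e.1 * eps <= (cross_den p q e.1)%:~R
      else (seg_num e)%:~R + seg_drift e.1 * eps < (cross_den p q e.1)%:~R].
Proof.
have D_gt0 := cross_den_gt0 e.1.
rewrite /meets xden_dir_neq0 xu_dir xs_dir.
by rewrite !pmulr_lgt0 ?pmulr_lge0 ?invr_gt0 // !ltr_pdivrMr ?ler_pdivrMr // !mul1r.
Qed.

Lemma meets_segment e : meets R true (start 0) dir e = crosses_segment p q e.
Proof. by rewrite meets_dir !mulr0 !mul0r !addr0 ltr0z ltr_int ler0z ler_int. Qed.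

Lemma meets_shifted eps e : 0 < eps -> eps * p%:R < 1 ->
  meets R false (start eps) dir e = crosses_shifted p q e.
Proof.
move=> eps_gt0 epsp_lt1.
have epsp_gt0 : 0 < eps * p%:R by rewrite mulr_gt0 // ltr0n.
have eps_lt1 : eps < 1.
  by apply: le_lt_trans epsp_lt1; rewrite ler_pMr // ler1n.
rewrite meets_dir /crosses_shifted; case: e => [[] [i j]] /=.
all: rewrite ?mulN1r ?mulNr ?mul1r ?mul0r ?addr0 -?mulrA.
all: by rewrite ?subr_frac_gt0 ?ltr_subr_frac ?addr_frac_gt0 ?ltr_int_fracD
  ?addr_frac_ge0 ?ler0z ?ltr_int.
Qed.

End Crossings.

Lemma mul_bounded_eq0 (k D : int) : 0 <= k * D -> k * D < D -> k = 0.
Proof.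
move=> ? ?; have [?|[?|?]] : k < 0 \/ k = 0 \/ 0 < k by lia.
all: nia.
Qed.

Section Lattice.
Variables p q : nat.
Hypotheses (p_gt0 : (0 < p)%N) (q_gt0 : (0 < q)%N).

Lemma half_turnK : involutive (half_turn p q).
Proof. by case=> [[] [i j]] /=; congr (_, (_, _)); ring. Qed.

Lemma half_turn_kind e : (half_turn p q e).1 = e.1.
Proof. by case: e => [[] [i j]]. Qed.

Lemma seg_num_half_turn e : seg_num (half_turn p q e) = cross_den p q e.1 - seg_num e.
Proof. by case: e => [[] [i j]] /=; ring. Qed.

Lemma mid_side_half_turn e : mid_side p q (half_turn p q e) = - mid_side p q e.
Proof. by case: e => [[] [i j]] /=; ring. Qed.

Lemma crosses_segment_half_turn e :
  crosses_segment p q (half_turn p q e) = crosses_segment p q e.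
Proof. by case: e => [[] [i j]]; rewrite /crosses_segment /=; apply/idP/idP; lia. Qed.

Lemma crosses_segment_bounds k i j : crosses_segment p q (k, (i, j)) ->
  -2 <= i <= q%:Z + 1 /\ -2 <= j <= p%:Z + 1.
Proof.
have := p_gt0; have := q_gt0.
by case: k; rewrite /crosses_segment /= => ? ? /and4P[? ? ? ?]; nia.
Qed.

(* The instances of mul_bounded_eq0 below rule out crossing points that would
   be lattice points, or common interior points of two distinct edges. *)
Lemma seg_num_gt0 e : crosses_segment p q e -> 0 < seg_num e.
Proof.
have := p_gt0; have := q_gt0.
case: e => [[] [i j]]; rewrite /crosses_segment /= => ? ? /and4P[? ? ? ?].
- by have := mul_bounded_eq0 (- i) p; nia.
- by have := mul_bounded_eq0 (- j) q; nia.
- by have := mul_bounded_eq0 (j + 1) (p%:Z + q%:Z); nia.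
Qed.

Lemma crossing_point_inj e f : crosses_segment p q e -> crosses_segment p q f ->
  seg_num e * cross_den p q f.1 = seg_num f * cross_den p q e.1 -> e = f.
Proof.
have := p_gt0; have := q_gt0 => q0 p0.
case: e => [[] [i j]]; case: f => [[] [i' j']]; rewrite /crosses_segment /=.
all: move=> /and4P[? ? ? ?] /and4P[? ? ? ?] same_point.
- have jj' : j = j' by nia.
  subst j'; congr (_, (_, _)); have := mul_bounded_eq0 (i - i') p.
  by have := mul_bounded_eq0 (i' - i) p; nia.
- by exfalso; have := mul_bounded_eq0 (i' - i) p; nia.
- by exfalso; have := mul_bounded_eq0 (i' + j' + 1 - j - i) p; nia.
- by exfalso; have := mul_bounded_eq0 (i - i') p; nia.
- have ii' : i = i' by nia.
  subst i'; congr (_, (_, _)); have := mul_bounded_eq0 (j - j') q.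
  by have := mul_bounded_eq0 (j' - j) q; nia.
- by exfalso; have := mul_bounded_eq0 (i' + j' + 1 - i - j) q; nia.
- by exfalso; have := mul_bounded_eq0 (i + j + 1 - j' - i') p; nia.
- by exfalso; have := mul_bounded_eq0 (i + j + 1 - i' - j') q; nia.
- have j'E : j' = i + j - i' by nia.
  subst j'; suff ii' : i = i' by rewrite ii'; congr (_, (_, _)); ring.
  have := mul_bounded_eq0 (i - i') (p%:Z + q%:Z).
  by have := mul_bounded_eq0 (i' - i) (p%:Z + q%:Z); nia.
Qed.

Hypothesis pq_coprime : coprime p q.

Lemma lattice_point_on_segment (x y : int) :
  y * q%:Z = x * p%:Z -> 0 <= x + y < p%:Z + q%:Z -> x = 0 /\ y = 0.
Proof.
move=> on_line bounds.
have p_dvd_y : (p%:Z %| y)%Z.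
  by rewrite -(Gauss_dvdzl _ (_ : coprimez p q)) -?coprimezE // on_line dvdz_mull.
have [k y_eq] := dvdzP p_dvd_y.
have x_eq : x = k * q%:Z.
  by apply/(mulIf (lt0r_neq0 (_ : 0 < p%:Z))); [lia | rewrite -on_line y_eq mulrAC].
by have := mul_bounded_eq0 k (p%:Z + q%:Z); have := p_gt0; nia.
Qed.

(* Where the two predicates differ, either L_t passes through an endpoint of e,
   which by coprimality can only be the origin, or (q, p) lies inside e. *)
Lemma crosses_shiftedE e :
  crosses_shifted p q e = crosses_segment p q e || (e \in origin_edges).
Proof.
have := p_gt0; have := q_gt0 => q0 p0.
case: e => [[] [i j]]; rewrite /crosses_shifted /crosses_segment !inE !xpair_eqE /=.
- apply/idP/idP; have := lattice_point_on_segment (i + 1) j;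
    by have := mul_bounded_eq0 (q%:Z - i) p; nia.
- apply/idP/idP; have := lattice_point_on_segment i j;
    by have := mul_bounded_eq0 (p%:Z - j) q; nia.
- apply/idP/idP; have := lattice_point_on_segment (i + 1) j;
    by have := mul_bounded_eq0 (j + 1 - p%:Z) (p%:Z + q%:Z); nia.
Qed.

End Lattice.

Definition box_bases (q p : nat) : seq (int * int) :=
  [seq (a%:Z - 2, b%:Z - 2) | a <- iota 0 (q + 4), b <- iota 0 (p + 4)].

Lemma box_allpairs q p :
  box q p = [seq (k, v) | k <- [:: EH; EV; ED], v <- box_bases q p].
Proof. by congr flatten; apply: eq_map => k; rewrite map_allpairs. Qed.

Lemma box_uniq q p : uniq (box q p).
Proof.
rewrite box_allpairs allpairs_uniq ?allpairs_uniq ?iota_uniq //.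
- by move=> [a b] [a' b'] _ _ /= [] /addIr/eqP + /addIr/eqP; rewrite !eqz_nat => /eqP-> /eqP->.
- by move=> [k v] [k' v'] _ _ /= [-> ->].
Qed.

Lemma mem_box q p k (i j : int) :
  -2 <= i <= q%:Z + 1 -> -2 <= j <= p%:Z + 1 -> (k, (i, j)) \in box q p.
Proof.
move=> i_bounds j_bounds; rewrite box_allpairs allpairs_f //; first by case: k.
apply/allpairsP; exists (absz (i + 2), absz (j + 2)); rewrite !mem_iota /=.
by split; [lia | lia | congr (_, _); lia].
Qed.

Lemma sorted_lt_inj_in {T : eqType} {d : Order.disp_t} {U : porderType d}
    {f : T -> U} {s : seq T} :
  sorted (relpre f <%O) s -> {in s &, injective f}.
Proof.
move=> s_sorted x y x_in y_in fxy.
have lt_tr : transitive (relpre f <%O) by move=> ? ? ? /=; apply: lt_trans.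
case: (ltngtP (index x s) (index y s)) => [lt_xy|lt_yx|].
- by have := sorted_ltn_index lt_tr s_sorted x y x_in y_in lt_xy; rewrite /= fxy ltxx.
- by have := sorted_ltn_index lt_tr s_sorted y x y_in x_in lt_yx; rewrite /= fxy ltxx.
- by move=> same_index; rewrite -(nth_index x x_in) same_index nth_index.
Qed.

Section Words.
Variable R : realFieldType.
Variables p q : nat.
Hypotheses (p_gt0 : (0 < p)%N) (q_gt0 : (0 < q)%N) (pq_coprime : coprime p q).
Variable eps : R.
Hypotheses (eps_gt0 : 0 < eps) (eps_small : eps * (p%:R + q%:R) < 2^-1).

Local Notation dir := ((q%:R, p%:R) : R * R).
Local Notation start e := ((- e, 0) : R * R).

Let pos0 e := xs R (start 0) dir e.
Let pos_eps e := xs R (start eps) dir e.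
Let crossed := sort (relpre pos0 <=%R) (filter (meets R true (start 0) dir) (box q p)).
Let crossed_eps :=
  sort (relpre pos_eps <=%R) (filter (meets R false (start eps) dir) (box q p)).

Lemma pR_gt0 : (0 : R) < p%:R. Proof. by rewrite ltr0n. Qed.
Lemma qR_gt0 : (0 : R) < q%:R. Proof. by rewrite ltr0n. Qed.

Lemma eps_p_small : eps * p%:R < 2^-1.
Proof. by apply: le_lt_trans eps_small; rewrite ler_pM2l // lerDl ler0n. Qed.

Lemma mem_crossed e : (e \in crossed) = crosses_segment p q e.
Proof.
rewrite mem_sort mem_filter meets_segment //; apply: andb_idr; case: e => k [i j].
by case/(crosses_segment_bounds _ _ p_gt0 q_gt0); apply: mem_box.
Qed.

Lemma mem_crossed_eps e :
  (e \in crossed_eps) = crosses_segment p q e || (e \in origin_edges).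
Proof.
rewrite mem_sort mem_filter meets_shifted ?(lt_trans eps_p_small) ?invf_lt1 ?ltr1n //.
rewrite crosses_shiftedE //; apply: andb_idr => /orP[|].
- by rewrite -mem_crossed mem_sort mem_filter => /andP[].
- by rewrite !inE => /or3P[] /eqP->; apply: mem_box; lia.
Qed.

Lemma pos0E e : pos0 e = (seg_num e)%:~R / (cross_den p q e.1)%:~R.
Proof. by rewrite /pos0 xs_dir // mulr0 addr0. Qed.

Lemma pos_epsE e :
  pos_eps e = ((seg_num e)%:~R + seg_drift R e.1 * eps) / (cross_den p q e.1)%:~R.
Proof. exact: xs_dir. Qed.

Lemma pos0_le e f :
  (pos0 e <= pos0 f) = (seg_num e * cross_den p q f.1 <= seg_num f * cross_den p q e.1).
Proof.
have [De_gt0 Df_gt0] := (cross_den_gt0 R _ _ p_gt0 q_gt0 e.1, cross_den_gt0 R _ _ p_gt0 q_gt0 f.1).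
by rewrite !pos0E ler_pdivrMr // mulrAC ler_pdivlMr // -!intrM ler_int.
Qed.

Lemma seg_drift_small k k' : 0 <= seg_drift R k * eps * (cross_den p q k')%:~R < 1.
Proof.
have := ler_wpM2l (ltW eps_gt0) (cross_den_le R p q k'); have := eps_small.
have := cross_den_gt0 R _ _ p_gt0 q_gt0 k'; have := eps_gt0.
by case: k; rewrite /= ?mul0r ?ltr01 ?lexx // mul1r; nra.
Qed.

Lemma pos_eps_lt_of_pos0_lt e f : pos0 e < pos0 f -> pos_eps e < pos_eps f.
Proof.
rewrite ltNge pos0_le -ltNge => lt_int.
have : ((seg_num e * cross_den p q f.1 + 1)%:~R : R) <= (seg_num f * cross_den p q e.1)%:~R.
  by rewrite ler_int; lia.
rewrite intrD !intrM => gap.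
have [De_gt0 Df_gt0] := (cross_den_gt0 R _ _ p_gt0 q_gt0 e.1, cross_den_gt0 R _ _ p_gt0 q_gt0 f.1).
rewrite !pos_epsE ltr_pdivrMr // mulrAC ltr_pdivlMr // !mulrDl.
have := seg_drift_small e.1 f.1; have := seg_drift_small f.1 e.1.
by move=> /andP[? ?] /andP[? ?]; lra.
Qed.

Lemma pos_eps_origin :
  [seq pos_eps e | e <- origin_edges] = [:: 0; eps / (p%:R + q%:R); eps / q%:R].
Proof.
rewrite /= !pos_epsE /= (_ : -1 + 0 + 1 = 0 :> int) //.
by rewrite !mulr0z !mul0r !add0r !mul1r mul0r intrD.
Qed.

Lemma pos_eps_origin_lt e : crosses_segment p q e -> eps / q%:R < pos_eps e.
Proof.
move=> e_cr; have B_ge1 : (1 : R) <= (seg_num e)%:~R.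
  by rewrite ler1z; apply: seg_num_gt0 e_cr.
have q_ge1 : (1 : R) <= q%:R by rewrite ler1n.
have drift_ge0 : 0 <= seg_drift R e.1 * eps.
  by case: e.1; rewrite /= ?mul0r ?mul1r ?lexx ?ltW.
have := ler_wpM2l (ltW eps_gt0) (cross_den_le R p q e.1); have := eps_small.
have D_gt0 := cross_den_gt0 R _ _ p_gt0 q_gt0 e.1.
by rewrite pos_epsE ltr_pdivrMr ?qR_gt0 // mulrAC ltr_pdivlMr //; nra.
Qed.

Lemma crossed_sorted : sorted (relpre pos0 <%R) crossed.
Proof.
rewrite -sorted_map lt_sorted_uniq_le sorted_map sort_sorted; last first.
  by move=> e f; apply: le_total.
rewrite andbT map_inj_in_uniq ?sort_uniq ?filter_uniq ?box_uniq //.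
move=> e f; rewrite !mem_crossed => e_cr f_cr same_pos.
apply: (crossing_point_inj _ _ p_gt0 q_gt0 _ _ e_cr f_cr).
by apply/eqP; rewrite eq_le -!pos0_le same_pos lexx.
Qed.

Lemma origin_crossed_sorted : sorted (relpre pos_eps <%R) (origin_edges ++ crossed).
Proof.
have lt_tr : transitive (relpre pos_eps <%R) by move=> ? ? ? /=; apply: lt_trans.
have := pos_eps_origin; rewrite /= => -[pos_EH pos_ED pos_EV].
rewrite path_sortedE // (sub_sorted pos_eps_lt_of_pos0_lt crossed_sorted) andbT.
rewrite pos_EH pos_ED pos_EV; have [p0 q0] := (pR_gt0, qR_gt0).
apply/and3P; split.
- by rewrite divr_gt0 ?addr_gt0.
- by rewrite ltr_pM2l // ltf_pV2 ?posrE ?addr_gt0 // ltrDr.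
- by apply/allP => e; rewrite mem_crossed /= pos_EV; apply: pos_eps_origin_lt.
Qed.

Lemma crossed_epsE : crossed_eps = origin_edges ++ crossed.
Proof.
have lt_tr : transitive (relpre pos_eps <%R) by move=> ? ? ? /=; apply: lt_trans.
apply/esym/(@sorted_eq_in _ (relpre pos_eps <=%R)).
- by move=> ? ? ? _ _ _ /=; apply: le_trans.
- move=> e f e_in f_in /le_anti same_pos.
  exact: (sorted_lt_inj_in origin_crossed_sorted).
- by apply: sub_sorted origin_crossed_sorted => e f /ltW.
- by apply: sort_sorted => e f; apply: le_total.
apply: uniq_perm.
- by apply: sorted_uniq origin_crossed_sorted => // e; rewrite /= ltxx.
- by rewrite sort_uniq filter_uniq ?box_uniq.
- by move=> e; rewrite mem_cat mem_crossed_eps mem_crossed orbC.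
Qed.

Lemma pos0_half_turn e : pos0 (half_turn p q e) = 1 - pos0 e.
Proof.
have := lt0r_neq0 (cross_den_gt0 R _ _ p_gt0 q_gt0 e.1).
by rewrite !pos0E seg_num_half_turn half_turn_kind intrB => ?; field.
Qed.

Lemma rev_crossed : rev crossed = map (half_turn p q) crossed.
Proof.
apply: (@irr_sorted_eq _ (relpre pos0 >%R)).
- by move=> ? ? ? /= h1 h2; apply: lt_trans h2 h1.
- by move=> e; rewrite /= ltxx.
- by rewrite rev_sorted crossed_sorted.
- rewrite sorted_map; apply: sub_sorted crossed_sorted => e f /=.
  by rewrite !pos0_half_turn ltrD2l ltrN2.
move=> e; rewrite mem_rev -{2}(half_turnK p q e) (mem_map (can_inj (half_turnK p q))).
by rewrite !mem_crossed crosses_segment_half_turn.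
Qed.

Lemma edge_letter_segment e :
  edge_letter R (start 0) dir e = (edge_gen e, 0 <= mid_side p q e).
Proof.
by rewrite /edge_letter cross_mid_dir mul0r subr0 pmulr_lge0 ?invr_gt0 ?ltr0n // ler0z.
Qed.

Lemma edge_letter_shifted e :
  edge_letter R (start eps) dir e = (edge_gen e, 0 < mid_side p q e).
Proof.
rewrite /edge_letter cross_mid_dir; congr (_, _).
have := eps_p_small; have := mulr_gt0 eps_gt0 pR_gt0.
case: (ltrP 0 (mid_side p q e)) => [C_gt0|C_le0] epsp_gt0 epsp_small.
- have : (1 : R) <= (mid_side p q e)%:~R by rewrite ler1z.
  by move=> C_ge1; apply/idP; lra.
- have : ((mid_side p q e)%:~R : R) <= 0 by rewrite lerz0.
  by move=> C_nonpos; apply/negbTE; rewrite -ltNge; lra.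
Qed.

Lemma omega_bar_eq : omega_bar R p q eps = gx :: gy :: gz :: winv (omega R p q).
Proof.
have -> : omega R p q = map (edge_letter R (start 0) dir) crossed.
  by rewrite /omega /crossing_word /crossed /pos0 oppr0.
have -> : omega_bar R p q eps = map (edge_letter R (start eps) dir) crossed_eps by [].
rewrite crossed_epsE map_cat /winv -!map_rev rev_crossed -!map_comp.
have [p0 q0] := (p_gt0, q_gt0).
rewrite /= !edge_letter_shifted /= /gx /gy /gz; congr (_ :: _ :: _ :: _).
- by congr (_, _); apply/idP; lia.
- by congr (_, _); apply/idP; lia.
- by congr (_, _); apply/idP; lia.
apply: eq_map => e /=.
rewrite edge_letter_segment edge_letter_shifted /linv mid_side_half_turn.
by rewrite /edge_gen half_turn_kind oppr_ge0 -ltNge.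
Qed.

End Words.

Theorem lemma5p4 (R : realFieldType) (p q : nat) :
  (0 < p)%N -> (0 < q)%N -> coprime p q ->
  exists eps0 : R, 0 < eps0 /\
    forall eps : R, 0 < eps -> eps < eps0 ->
      fg_eq (omega_bar R p q eps) (gx :: gy :: gz :: winv (omega R p q)).
Proof.
move=> p_gt0 q_gt0 pq_coprime.
have pqR_gt0 : (0 : R) < p%:R + q%:R by rewrite addr_gt0 ?ltr0n.
exists (2^-1 / (p%:R + q%:R)); split; first by rewrite divr_gt0 ?invr_gt0 ?ltr0n.
move=> eps eps_gt0; rewrite ltr_pdivlMr // => eps_small.
by rewrite /fg_eq omega_bar_eq.
Qed.
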